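(* For every deterministic one-counter automaton $\mathcal{A}$ over a finite alphabet $\Sigma$, one can construct a visibly-pushdown automaton $\tilde{\mathcal{A}}$ over the pushdown alphabet $\tilde\Sigma:=(\Sigma\times\{c\},\ (\Sigma\times\{i\})\cup\{\mathtt{x}\},\ \Sigma\times\{r\})$, where $\mathtt{x}$ is a fresh internal letter, such that every word in $L(\tilde{\mathcal{A}})$ is of the form $\tilde a_1\mathtt{x}\tilde a_2\mathtt{x}\cdots\mathtt{x}\tilde a_n$ with $\tilde a_1,\dots,\tilde a_n\in\Sigma\times\{c,i,r\}$, and $$L(\mathcal{A})=\{\pi_1(\tilde a_1\cdots\tilde a_n)\mid \tilde a_1\mathtt{x}\cdots\mathtt{x}\tilde a_n\in L(\tilde{\mathcal{A}})\}.$$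
   Context: A deterministic one-counter automaton is a deterministic pushdown automaton whose stack alphabet has a single letter besides the bottom-of-stack symbol. A pushdown alphabet is an alphabet partitioned into call, internal and return letters $(\Sigma_c,\Sigma_i,\Sigma_r)$. A visibly-pushdown automaton (VPA) $(Q,I,F,\Gamma,\delta)$ over it has states $Q$, initial states $I$, final states $F$, stack alphabet $\Gamma$ containing a bottom symbol $\lhd$, and transitions of types $Q\times\Sigma_c\times Q\times(\Gamma\setminus\{\lhd\})$ (push), $Q\times\Sigma_r\times\Gamma\times Q$ (pop, where popping at $\lhd$ leaves the stack $\lhd$), and $Q\times\Sigma_i\times Q$ (stack unchanged); acceptance is by reaching a final state from an initial state with stack $\lhd$. For a word $\tilde a_1\cdots\tilde a_n$ over $\Sigma\times\{c,i,r\}$, its projection $\pi_1(\tilde a_1\cdots\tilde a_n)$ is the word in $\Sigma^*$ obtained by taking the first coordinate of every letter. *)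

From HB Require Import structures.
From mathcomp Require Import all_boot.
Set Implicit Arguments. Unset Strict Implicit. Unset Printing Implicit Defensive.

Inductive kind := Kc | Ki | Kr.

Definition kind_to (k : kind) : 'I_3 :=
  match k with Kc => inord 0 | Ki => inord 1 | Kr => inord 2 end.
Definition kind_of (i : 'I_3) : kind :=
  match val i with 0 => Kc | 1 => Ki | _ => Kr end.
Lemma kind_toK : cancel kind_to kind_of.
Proof. by case; rewrite /kind_of /= inordK. Qed.
HB.instance Definition _ := Finite.copy kind (can_type kind_toK).

(* A pushdown automaton (Q, I, F, Gamma, delta) over alphabet A, with the
   transition shapes of the paper: push  Q x A x Q x (Gamma \ {bot}),
   pop  Q x A x Gamma x Q, internal  Q x A x Q. *)
Record PDA (A : Type) := {
  Q : finType;
  init : pred Q;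
  fin : pred Q;
  Gam : finType;
  bot : Gam;
  push : Q -> A -> Q -> Gam -> bool;
  pop  : Q -> A -> Gam -> Q -> bool;
  intr : Q -> A -> Q -> bool
}.
Arguments Q {A} P : rename.
Arguments init {A} P _ : rename.
Arguments fin {A} P _ : rename.
Arguments Gam {A} P : rename.
Arguments bot {A} P : rename.
Arguments push {A} P _ _ _ _ : rename.
Arguments pop {A} P _ _ _ _ : rename.
Arguments intr {A} P _ _ _ : rename.

(* configuration: state and stack content above the bottom symbol, top first *)
Definition cfg A (P : PDA A) := (Q P * seq (Gam P))%type.

(* one step reading letter a; [ok a k] says whether a transition of kind k may
   be used on letter a (always true for ordinary PDA, visibility for VPA). *)
Definition pstep A (P : PDA A) (ok : A -> kind -> bool)
    (c : cfg P) (a : A) (c' : cfg P) : Prop :=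
  (ok a Kc /\ exists g, g != bot P /\ push P c.1 a c'.1 g /\ c'.2 = g :: c.2)
  \/ (ok a Kr /\ exists g, pop P c.1 a g c'.1 /\
        match c.2 with
        | [::] => g = bot P /\ c'.2 = [::]      (* popping at bot leaves bot *)
        | g' :: s => g = g' /\ c'.2 = s
        end)
  \/ (ok a Ki /\ intr P c.1 a c'.1 /\ c'.2 = c.2).

Fixpoint reach A (P : PDA A) ok (c : cfg P) (w : seq A) (c' : cfg P) : Prop :=
  match w with
  | [::] => c = c'
  | a :: w' => exists c1, pstep ok c a c1 /\ reach ok c1 w' c'
  end.

Definition accepts A (P : PDA A) ok (w : seq A) : Prop :=
  exists q0 q s, init P q0 /\ fin P q /\ reach ok (q0, [::]) w (q, s).

Definition pda_lang A (P : PDA A) (w : seq A) : Prop :=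
  accepts P (fun _ _ => true) w.

Definition deterministic A (P : PDA A) : Prop :=
  #|[pred q | init P q]| = 1 /\
  forall (q : Q P) (a : A) (g : Gam P),
    #|[pred x : Q P * Gam P | push P q a x.1 x.2 && (x.2 != bot P)]|
    + #|[pred q' | pop P q a g q']| + #|[pred q' | intr P q a q']| <= 1.

(* deterministic one-counter automaton: deterministic PDA whose stack
   alphabet has a single letter besides bot *)
Definition is_DOCA A (P : PDA A) : Prop := deterministic P /\ #|Gam P| = 2.

(* The pushdown alphabet tilde Sigma: Some (a, k) is (a,k) in Sigma x {c,i,r},
   None is the fresh internal letter x. *)
Definition tsym (Sigma : finType) := option (Sigma * kind).
Definition tkind (Sigma : finType) (t : tsym Sigma) : kind :=
  if t is Some (_, k) then k else Ki.

Definition vpa_lang (Sigma : finType) (V : PDA (tsym Sigma)) (w : seq (tsym Sigma)) : Prop :=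
  accepts V (fun t k => tkind t == k) w.

Definition interleave (Sigma : finType) (ts : seq (Sigma * kind)) : seq (tsym Sigma) :=
  match ts with
  | [::] => [::]
  | t :: ts' => Some t :: flatten [seq [:: None; Some t'] | t' <- ts']
  end.

From mathcomp Require Import all_boot.
Set Implicit Arguments. Unset Strict Implicit. Unset Printing Implicit Defensive.

(* The VPA reads A's input with every letter annotated by the kind (push, pop
   or internal) of the transition A takes on it, and it executes exactly that
   transition of A on its own stack, so its visible stack discipline is that of
   A's run; a phase flag in its states forces the separator x between
   consecutive letters. Erasing the annotations turns accepting runs of the VPA
   into accepting runs of A and back. *)

Lemma eq_kindE (k k' : kind) :
  (k == k') = match k, k' with Kc, Kc | Ki, Ki | Kr, Kr => true | _, _ => false end.
Proof. by apply/eqP/idP; case: k; case: k'. Qed.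

Section AnnotatedRuns.
Variables (S : Type) (P : PDA S).

Definition only_kind (k : kind) (_ : S) (k' : kind) : bool := k' == k.

Lemma pstep_anyE c a c' :
  @pstep _ P (fun _ _ => true) c a c' <-> exists k, pstep (only_kind k) c a c'.
Proof.
split=> [[[_ ?]|[[_ ?]|[_ ?]]]|[k [[_ ?]|[[_ ?]|[_ ?]]]]]; rewrite /pstep; auto.
- by exists Kc; left; split; first exact: eqxx.
- by exists Kr; right; left; split; first exact: eqxx.
- by exists Ki; right; right; split; first exact: eqxx.
Qed.

Fixpoint reach_annot (c : cfg P) (ts : seq (S * kind)) (c' : cfg P) : Prop :=
  if ts is (a, k) :: ts' then
    exists c1, pstep (only_kind k) c a c1 /\ reach_annot c1 ts' c'
  else c = c'.

Lemma reach_anyE c u c' :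
  @reach _ P (fun _ _ => true) c u c' <->
  exists ts, u = unzip1 ts /\ reach_annot c ts c'.
Proof.
elim: u c => [|a u IHu] c /=.
  by split=> [->|[[|? ?] [//]]]; first by exists [::].
split=> [[c1 [/pstep_anyE[k step] /IHu[ts [-> run]]]]|].
  by exists ((a, k) :: ts); split=> //; exists c1.
case=> -[|[b k] ts] [//= [-> u_ts]] [c1 [step run]].
exists c1; split; first by apply/pstep_anyE; exists k.
by apply/IHu; exists ts.
Qed.

Definition annot_accepts (ts : seq (S * kind)) : Prop :=
  exists q0 q s, init P q0 /\ fin P q /\ reach_annot (q0, [::]) ts (q, s).

Lemma pda_langE u :
  pda_lang P u <-> exists ts, u = unzip1 ts /\ annot_accepts ts.
Proof.
split=> [[q0 [q [s [q0_init [q_fin /reach_anyE[ts [-> run]]]]]]]|].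
  by exists ts; split=> //; exists q0, q, s.
case=> ts [-> [q0 [q [s [q0_init [q_fin run]]]]]].
by exists q0, q, s; do 2 split=> //; apply/reach_anyE; exists ts.
Qed.

End AnnotatedRuns.

Section AnnotatedVPA.
Variables (Sigma : finType) (A : PDA Sigma).

(* A letter of Sigma x {c,i,r} may be read only in phase Start or Sep, the
   separator x only in phase Letter. *)
Local Notation Start := (@None bool).
Local Notation Letter := (Some true).
Local Notation Sep := (Some false).

Definition vstate : finType := (Q A * option bool)%type.

Definition letter_move (x y : vstate) : bool := (x.2 != Letter) && (y.2 == Letter).

Definition vpush (x : vstate) (t : tsym Sigma) (y : vstate) (g : Gam A) : bool :=
  if t is Some (a, Kc) then letter_move x y && push A x.1 a y.1 g else false.

Definition vpop (x : vstate) (t : tsym Sigma) (g : Gam A) (y : vstate) : bool :=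
  if t is Some (a, Kr) then letter_move x y && pop A x.1 a g y.1 else false.

Definition vintr (x : vstate) (t : tsym Sigma) (y : vstate) : bool :=
  match t with
  | Some (a, Ki) => letter_move x y && intr A x.1 a y.1
  | None => [&& x.2 == Letter, y.2 == Sep & y.1 == x.1]
  | _ => false
  end.

Definition annot_vpa : PDA (tsym Sigma) := {|
  Q := vstate;
  init := fun x => init A x.1 && (x.2 == Start);
  fin := fun x => fin A x.1 && (x.2 != Sep);
  Gam := Gam A;
  bot := bot A;
  push := vpush;
  pop := vpop;
  intr := vintr |}.

Definition vok (t : tsym Sigma) (k : kind) : bool := tkind t == k.

Lemma vstep_letter q f s a k q' f' s' :
  @pstep _ annot_vpa vok (q, f, s) (Some (a, k)) (q', f', s') <->
  [/\ f != Letter, f' = Letter & pstep (only_kind k) (q, s) a (q', s')].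
Proof.
rewrite /pstep /= /vok /only_kind /vpush /vpop /vintr /letter_move !eq_kindE.
case: k => /=; split.
- case=> [[_ [g [gb [/andP[/andP[fL /eqP->] pu] st]]]]|[[//]|[//]]].
  by split=> //; left; split=> //; exists g.
- case=> fL -> [[_ [g [gb [pu st]]]]|[[//]|[//]]].
  by left; split=> //; exists g; rewrite fL eqxx pu.
- case=> [[//]|[[//]|[_ [/andP[/andP[fL /eqP->] it] st]]]].
  by split=> //; right; right.
- case=> fL -> [[//]|[[//]|[_ [it st]]]].
  by right; right; rewrite fL eqxx it.
- case=> [[//]|[[_ [g [/andP[/andP[fL /eqP->] po] st]]]|[//]]].
  by split=> //; right; left; split=> //; exists g.
- case=> fL -> [[//]|[[_ [g [po st]]]|[//]]].
  by right; left; split=> //; exists g; rewrite fL eqxx po.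
Qed.

Lemma vstep_sep q f s q' f' s' :
  @pstep _ annot_vpa vok (q, f, s) None (q', f', s') <->
  [/\ f = Letter, f' = Sep, q' = q & s' = s].
Proof.
rewrite /pstep /= /vok /vintr !eq_kindE; split.
- by case=> [[//]|[[//]|[_ [/and3P[/eqP-> /eqP-> /eqP->] ->]]]].
- by case=> -> -> -> ->; right; right; rewrite !eqxx.
Qed.

Local Notation vreach := (@reach _ annot_vpa vok).

Fixpoint xprefixed (ts : seq (Sigma * kind)) : seq (tsym Sigma) :=
  if ts is t :: ts' then None :: Some t :: xprefixed ts' else [::].

Lemma interleave_cons t ts : interleave (t :: ts) = Some t :: xprefixed ts.
Proof. by congr (_ :: _); elim: ts => //= t' ts ->. Qed.

Lemma vreach_xprefixed ts q s c' :
  vreach (q, Letter, s) (xprefixed ts) c' <->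
  exists q' s', c' = (q', Letter, s') /\ reach_annot (q, s) ts (q', s').
Proof.
elim: ts q s => [|[a k] ts IHts] q s /=.
  by split=> [<-|[q' [s' [-> [-> ->]]]]]; first by exists q, s.
split=> [[[[q1 f1] s1] [/vstep_sep[_ -> -> ->]]]|].
  case=> [[[q2 f2] s2]] [/vstep_letter[_ -> step]] /IHts[q' [s' [-> run]]].
  by exists q', s'; split=> //; exists (q2, s2).
case=> q' [s' [c'E [[q2 s2] [step run]]]].
exists (q, Sep, s); split; first exact/vstep_sep.
exists (q2, Letter, s2); split; first exact/vstep_letter.
by apply/IHts; exists q', s'.
Qed.

Lemma vreach_interleave t ts q f s c' : f != Letter ->
  vreach (q, f, s) (interleave (t :: ts)) c' <->
  exists q' s', c' = (q', Letter, s') /\ reach_annot (q, s) (t :: ts) (q', s').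
Proof.
rewrite interleave_cons; case: t => a k fL /=.
split=> [[[[q2 f2] s2] [/vstep_letter[_ -> step]]] /vreach_xprefixed[q' [s' [-> run]]]|].
  by exists q', s'; split=> //; exists (q2, s2).
case=> q' [s' [c'E [[q2 s2] [step run]]]].
exists (q2, Letter, s2); split; first exact/vstep_letter.
by apply/vreach_xprefixed; exists q', s'.
Qed.

Lemma vpa_lang_interleaveE ts :
  vpa_lang annot_vpa (interleave ts) <-> annot_accepts A ts.
Proof.
split=> [[[q0 f0] [[q f] [s [/andP[q0_init /eqP/= f0S] [/andP[q_fin _] run]]]]]|].
  exists q0, q, s; do 2 split=> //; subst f0.
  case: ts run => [[<- _ <-] //|t ts /vreach_interleave].
  by case/(_ isT)=> q' [s' [[-> _ ->]]].
case=> q0 [q [s [q0_init [q_fin run]]]].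
case: ts run => [[q0q _]|t ts run].
  by exists (q0, Start), (q0, Start), [::]; rewrite /= q0_init q0q q_fin.
exists (q0, Start), (q, Letter), s; split; first by rewrite /= q0_init.
split; first by rewrite /= q_fin.
by apply/vreach_interleave => //; exists q, s.
Qed.

Lemma vreach_shape w q f s q' f' s' :
  vreach (q, f, s) w (q', f', s') -> f' != Sep ->
  if f == Letter then exists ts, w = xprefixed ts
  else w = [::] /\ f' = f \/ exists t ts, w = Some t :: xprefixed ts.
Proof.
elim: w q f s => [|[[a k]|] w IHw] q f s /= run f'NS.
- by case: run => _ -> _; case: ifP => _; [exists [::] | left].
- case: run => -[[q1 f1] s1] [/vstep_letter[fL -> _] /IHw/(_ f'NS)] /= [ts ->].
  by rewrite (negbTE fL); right; exists (a, k), ts.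
- case: run => -[[q1 f1] s1] [/vstep_sep[-> -> _ _] /IHw/(_ f'NS)] /= [[_ f'S]|].
    by rewrite f'S in f'NS.
  by case=> t [ts ->]; exists (t :: ts).
Qed.

Lemma vpa_lang_interleaved w :
  vpa_lang annot_vpa w -> exists ts, w = interleave ts.
Proof.
case=> -[q0 f0] [[q f] [s [/andP[_ /eqP/= f0S] [/andP[_ fS] run]]]].
subst f0; case: (vreach_shape run fS) => [[-> _]|[t [ts ->]]].
  by exists [::].
by exists (t :: ts); rewrite interleave_cons.
Qed.

End AnnotatedVPA.

Theorem lemma3p1 (Sigma : finType) (A : PDA Sigma) :
  is_DOCA A ->
  exists V : PDA (tsym Sigma),
    (forall w, vpa_lang V w -> exists ts : seq (Sigma * kind), w = interleave ts) /\
    (forall u : seq Sigma,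
       pda_lang A u <->
       exists ts : seq (Sigma * kind),
         vpa_lang V (interleave ts) /\ u = [seq t.1 | t <- ts]).
Proof.
move=> _; exists (annot_vpa A); split; first exact: vpa_lang_interleaved.
move=> u; split=> [/pda_langE[ts [-> acc]]|[ts [/vpa_lang_interleaveE acc ->]]].
  by exists ts; split=> //; apply/vpa_lang_interleaveE.
by apply/pda_langE; exists ts.
Qed.
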